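(* Let $X$ be a separable real Banach space and let $(\Omega,\beta,\mu)$ be a complete probability measure space. Let $T:\Omega\times X\to X$ be a continuous random mapping such that there are real-valued random variables $\alpha_2,\alpha_3:\Omega\to[0,\infty)$ with $\alpha_2(\omega)+\alpha_3(\omega)<1$ for all $\omega\in\Omega$ and, for every $\omega\in\Omega$ and all $X$-valued random variables $x_1,x_2:\Omega\to X$, $$\|T(\omega,x_1(\omega))-T(\omega,x_2(\omega))\|\le \alpha_2(\omega)\|x_1(\omega)-T(\omega,x_1(\omega))\|+\alpha_3(\omega)\|x_2(\omega)-T(\omega,x_2(\omega))\|.$$ Then $T$ has a random fixed point, and it is unique (any two random fixed points of $T$ coincide almost surely).
   Context: An $X$-valued random variable is a map $x:\Omega\to X$ such that $x^{-1}(B)\in\beta$ for every Borel set $B\subseteq X$. A random mapping is a map $T:\Omega\times X\to X$ such that $\omega\mapsto T(\omega,x)$ is an $X$-valued random variable for every fixed $x\in X$. A random mapping $T$ is continuous if the set of $\omega\in\Omega$ for which $x\mapsto T(\omega,x)$ is continuous has $\mu$-measure one. A random fixed point of $T$ is an $X$-valued random variable $x$ with $\mu\{\omega\in\Omega: T(\omega,x(\omega))=x(\omega)\}=1$. *)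

From HB Require Import structures.
From mathcomp Require Import all_boot all_order all_algebra.
From mathcomp Require Import all_classical all_reals all_analysis.
Set Implicit Arguments. Unset Strict Implicit. Unset Printing Implicit Defensive.
Import Order.TTheory GRing.Theory Num.Theory.
Import numFieldNormedType.Exports.
Local Open Scope classical_set_scope.
Local Open Scope ring_scope.

Definition borel_set (X : topologicalType) (B : set X) : Prop := <<s open >> B.

Definition separable_space (X : topologicalType) : Prop :=
  exists D : set X, countable D /\ closure D = setT.

Definition X_random_variable d (Omega : measurableType d) (X : topologicalType)
  (x : Omega -> X) : Prop :=
  forall B : set X, borel_set B -> measurable (x @^-1` B).

Definition random_mapping d (Omega : measurableType d) (X : topologicalType)
  (T : Omega -> X -> X) : Prop :=
  forall x : X, X_random_variable (fun w => T w x).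

Definition continuous_random_mapping d (Omega : measurableType d) (R : realType)
  (mu : probability Omega R) (X : topologicalType) (T : Omega -> X -> X) : Prop :=
  random_mapping T /\
  measurable [set w | continuous (T w)] /\
  mu [set w | continuous (T w)] = 1%E.

Definition random_fixed_point d (Omega : measurableType d) (R : realType)
  (mu : probability Omega R) (X : topologicalType) (T : Omega -> X -> X)
  (x : Omega -> X) : Prop :=
  X_random_variable x /\
  measurable [set w | T w (x w) = x w] /\
  mu [set w | T w (x w) = x w] = 1%E.

(* Taking constant random variables in the hypothesis shows that every T w is
   a Kannan map: |T x - T y| <= a |x - T x| + b |y - T y| with a + b < 1.
   Along a Picard orbit the residuals |u - T u| then decay geometrically with
   ratio a / (1 - b), so the orbit is Cauchy and its limit is the unique fixed
   point x w.  Measurability of w |-> x w comes from the two-sided comparison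
   (1 - b) |c - T c| <= |c - x w| <= (1 + a) |c - T c|: the fixed point lies
   in an open set U iff some point c of a countable dense set has a small
   residual |c - T w c| while a ball of matching radius around c lies in U,
   a countable union of events that are measurable because T is a random
   mapping. *)

From HB Require Import structures.
From mathcomp Require Import all_boot all_order all_algebra.
From mathcomp Require Import all_classical all_reals all_analysis.
From mathcomp Require Import lra.

Set Implicit Arguments.
Unset Strict Implicit.
Unset Printing Implicit Defensive.
Import Order.TTheory GRing.Theory Num.Theory.
Import numFieldNormedType.Exports.
Local Open Scope classical_set_scope.
Local Open Scope ring_scope.

Definition kannan_map {R : numDomainType} {X : normedModType R} (a b : R)
    (K : X -> X) : Prop :=
  forall x y, `|K x - K y| <= a * `|x - K x| + b * `|y - K y|.

Section kannan_map.
Variables (R : numFieldType) (X : normedModType R) (a b : R) (K : X -> X).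
Hypothesis HK : kannan_map a b K.

Lemma kannan_fixed_point_unique p q : K p = p -> K q = q -> p = q.
Proof.
move=> Kp Kq; have := HK p q; rewrite Kp Kq !subrr normr0 !mulr0 addr0.
by rewrite normr_le0 subr_eq0 => /eqP.
Qed.

Lemma kannan_dist_fixed_le p c : K p = p -> `|c - p| <= (1 + a) * `|c - K c|.
Proof.
move=> Kp; have := HK c p; rewrite Kp subrr normr0 mulr0 addr0 => HKcp.
by apply: (le_trans (ler_distD (K c) c p)); rewrite mulrDl mul1r lerD2l.
Qed.

Lemma kannan_residual_le_dist p c : K p = p -> (1 - b) * `|c - K c| <= `|c - p|.
Proof.
move=> Kp; have := HK p c; rewrite Kp subrr normr0 mulr0 add0r => HKpc.
rewrite mulrBl mul1r lerBlDr.
by apply: (le_trans (ler_distD p c (K c))); rewrite lerD2l.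
Qed.

Lemma kannan_residual_contract x :
  b < 1 -> `|K x - K (K x)| <= a / (1 - b) * `|x - K x|.
Proof.
move=> b_lt1; rewrite mulrAC ler_pdivlMr ?subr_gt0 // mulrBr mulr1 lerBlDr.
by rewrite (mulrC _ b); apply: HK.
Qed.

End kannan_map.

Section kannan_iteration.
Variables (R : realType) (X : normedModType R) (a b : R) (K : X -> X).
Hypotheses (HK : kannan_map a b K) (a_ge0 : 0 <= a) (ab_lt1 : a + b < 1).

Lemma kannan_residual_iter_cvg0 x0 :
  `|iter n K x0 - K (iter n K x0)| @[n --> \oo] --> 0.
Proof.
have b_lt1 : b < 1 by apply: le_lt_trans ab_lt1; rewrite lerDr.
pose q := a / (1 - b).
have q_ge0 : 0 <= q by rewrite divr_ge0 // subr_ge0 ltW.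
have q_lt1 : q < 1 by rewrite ltr_pdivrMr ?subr_gt0 // mul1r ltrBrDr.
have residual_geometric n :
    `|iter n K x0 - K (iter n K x0)| <= geometric `|x0 - K x0| q n.
  elim: n => [|n IHn]; first by rewrite /= expr0 mulr1.
  rewrite iterS /= exprS mulrCA.
  apply: (le_trans (kannan_residual_contract HK _ b_lt1)).
  exact: ler_wpM2l IHn.
apply: (@squeeze_cvgr _ _ _ _ (fun=> 0) (geometric `|x0 - K x0| q)).
- by near=> n; rewrite normr_ge0 residual_geometric.
- exact: cvg_cst.
- by apply: cvg_geometric; rewrite ger0_norm.
Unshelve. all: by end_near. Qed.

End kannan_iteration.

Section kannan_fixed_point.
Variables (R : realType) (X : completeNormedModType R) (a b : R) (K : X -> X).
Hypotheses (HK : kannan_map a b K) (a_ge0 : 0 <= a) (b_ge0 : 0 <= b)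
  (ab_lt1 : a + b < 1).

Let residual_cvg0 := kannan_residual_iter_cvg0 HK a_ge0 ab_lt1.

Lemma kannan_iter_cvg x0 : cvg (K (iter n K x0) @[n --> \oo]).
Proof.
apply/cauchy_cvgP/cauchy_exP => e e_gt0.
have [N _ residualN] := cvgr_lt _ (residual_cvg0 x0) _ e_gt0.
exists (K (iter N K x0)); exists N => // n /= Nn; rewrite -ball_normE /=.
apply: le_lt_trans (HK _ _) _.
have := residualN N (leqnn N); have := residualN n Nn.
have := a_ge0; have := b_ge0; have := ab_lt1; nra.
Qed.

Lemma kannan_fixed_point : exists p, K p = p.
Proof.
pose u n := iter n K 0.
have Ku_cvg : K (u n) @[n --> \oo] --> lim (K (u n) @[n --> \oo]).
  exact: kannan_iter_cvg.
set p := lim _ in Ku_cvg; exists p.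
have a_le1 : a <= 1 by apply/ltW/(le_lt_trans _ ab_lt1); rewrite lerDl.
have residual_le n : (1 - b) * `|p - K p| <= `|p - K (u n)| + `|u n - K (u n)|.
  rewrite mulrBl mul1r lerBlDr -addrA.
  apply: (le_trans (ler_distD (K (u n)) p (K p))); rewrite lerD2l.
  by apply: (le_trans (HK _ _)); rewrite lerD2r ler_piMl.
have bound_cvg0 : `|p - K (u n)| + `|u n - K (u n)| @[n --> \oo] --> 0.
  rewrite -[0]addr0 -[X in X + _](normr0 X) -[0 : X](subrr p).
  exact: cvgD (cvg_norm (cvgB (cvg_cst p) Ku_cvg)) (residual_cvg0 0).
have : (1 - b) * `|p - K p| <= 0.
  by apply: (ler_cvg_to (cvg_cst _) bound_cvg0); exact: nearW.
rewrite pmulr_rle0 ?subr_gt0; last by apply: le_lt_trans ab_lt1; rewrite lerDr.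
by rewrite normr_le0 subr_eq0 => /eqP.
Qed.

End kannan_fixed_point.

Lemma kannan_fixed_point_in_open (R : realType) (X : normedModType R) (a b : R)
    (K : X -> X) (D U : set X) (p : X) :
  kannan_map a b K -> a <= 1 -> 0 <= b < 1 -> closure D = setT -> open U ->
  K p = p ->
  U p <-> exists m c,
    [/\ D c, ball c m.+1%:R^-1 `<=` U & `|c - K c| < m.+1%:R^-1 / 2].
Proof.
move=> HK a_le1 /andP[b_ge0 b_lt1] dense_D oU Kp; split; last first.
  move=> [m [c [_ cU residual_c]]]; apply: cU; rewrite -ball_normE /=.
  move: residual_c; set r := m.+1%:R^-1 => residual_c.
  have := kannan_dist_fixed_le HK c Kp; rewrite mulrDl mul1r.
  have := ler_piMl (normr_ge0 (c - K c)) a_le1; lra.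
move=> Up; have /nbhs_ballP[e /= e_gt0 peU] : nbhs p U by exact: open_nbhs_nbhs.
have e2_gt0 : 0 < e / 2 by rewrite divr_gt0.
have [m _ /(_ m (leqnn m)) /= rm_lt] := near_infty_natSinv_lt (PosNum e2_gt0).
set r : R := m.+1%:R^-1 in rm_lt *.
have r_gt0 : 0 < r by rewrite invr_gt0 ltr0n.
have del_gt0 : 0 < (1 - b) * r / 2 by rewrite divr_gt0 // mulr_gt0 // subr_gt0.
have : closure D p by rewrite dense_D.
move=> /(_ _ (nbhsx_ballx _ _ del_gt0)) [c [Dc]]; rewrite -ball_normE /= => pc.
exists m, c; rewrite -/r; split => //.
  move=> y /= cy; apply: peU; rewrite -ball_normE /=.
  have : (1 - b) * r <= r by apply: ler_piMl; [exact: ltW | rewrite gerBl].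
  have := ler_distD c p y; lra.
have := kannan_residual_le_dist HK c Kp; rewrite (distrC c p) => residual_c.
rewrite -(ltr_pM2l (_ : 0 < 1 - b)) ?subr_gt0 //; lra.
Qed.

Section random_variables.
Variables (d : measure_display) (Omega : measurableType d) (X : topologicalType).

Lemma X_random_variable_cst (c : X) : X_random_variable (fun _ : Omega => c).
Proof.
move=> B _; have [Bc|nBc] := pselect (B c).
  by rewrite (_ : _ @^-1` _ = setT) //; apply/seteqP; split.
by rewrite (_ : _ @^-1` _ = set0) //; apply/seteqP; split.
Qed.

Lemma X_random_variable_open (x : Omega -> X) :
  (forall U, open U -> measurable (x @^-1` U)) -> X_random_variable x.
Proof.
move=> x_open B borel_B.
have preimage_sigma := sigma_algebra_image x (@sigma_algebra_measurable _ Omega).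
have := smallest_sub preimage_sigma _ borel_B; rewrite /image_set_system /= setTI.
by apply => U oU /=; rewrite setTI; exact: x_open.
Qed.

End random_variables.

Lemma measurable_bigcup_countable d (T : measurableType d) I (D : set I)
    (F : I -> set T) :
  countable D -> (forall i, D i -> measurable (F i)) ->
  measurable (\bigcup_(i in D) F i).
Proof.
move=> cD mF; rewrite bigcup_set_type; apply: countable_bigcupT_measurable.
  by rewrite -(eq_countable (card_setT_sym D)).
by move=> i; apply/mF/set_valP.
Qed.

Lemma measurable_residual_lt (R : realType) (X : normedModType R) d
    (Omega : measurableType d) (T : Omega -> X -> X) (c : X) (e : R) :
  random_mapping T -> measurable [set w | `|c - T w c| < e].
Proof.
move=> rmT; have := rmT c (ball c e) (sub_gen_smallest (ball_open _ _)).
by rewrite -ball_normE.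
Qed.

Lemma kannan_fixed_point_random_variable (R : realType) (X : normedModType R)
    d (Omega : measurableType d) (T : Omega -> X -> X) (alpha2 alpha3 : Omega -> R)
    (x : Omega -> X) :
  separable_space X -> random_mapping T ->
  (forall w, kannan_map (alpha2 w) (alpha3 w) (T w)) ->
  (forall w, alpha2 w <= 1) -> (forall w, 0 <= alpha3 w < 1) ->
  (forall w, T w (x w) = x w) -> X_random_variable x.
Proof.
move=> [D [countable_D dense_D]] rmT KT a2_le1 a3_bound xP.
apply: X_random_variable_open => U oU.
have in_U w := kannan_fixed_point_in_open (KT w) (a2_le1 w) (a3_bound w)
  dense_D oU (xP w).
have -> : x @^-1` U = \bigcup_m \bigcup_(c in D)
    [set w | ball c m.+1%:R^-1 `<=` U /\ `|c - T w c| < m.+1%:R^-1 / 2].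
  apply/seteqP; split => w /=.
    by move/in_U => [m [c [Dc cU residual_c]]]; exists m => //; exists c.
  by move=> [m _ [c Dc [cU residual_c]]]; apply/in_U; exists m, c.
apply: bigcupT_measurable => m; apply: measurable_bigcup_countable => // c _.
have [cU|ncU] := pselect (ball c m.+1%:R^-1 `<=` U).
  rewrite (_ : [set w | _ /\ _] = [set w | `|c - T w c| < m.+1%:R^-1 / 2]).
    exact: measurable_residual_lt.
  by apply/seteqP; split => w /= => [[]|].
by rewrite (_ : [set w | _ /\ _] = set0) //; apply/seteqP; split => w // [].
Qed.

Section random_fixed_points.
Variables (R : realType) (d : measure_display) (Omega : measurableType d).
Variables (mu : probability Omega R) (X : topologicalType) (T : Omega -> X -> X).

Lemma random_fixed_point_ae (x : Omega -> X) :
  random_fixed_point mu T x -> {ae mu, forall w, T w (x w) = x w}.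
Proof.
move=> [_ [mfix mufix]]; exists (~` [set w | T w (x w) = x w]); split => //.
  exact: measurableC.
by rewrite probability_setC // mufix subee.
Qed.

Lemma random_fixed_point_everywhere (x : Omega -> X) :
  X_random_variable x -> (forall w, T w (x w) = x w) -> random_fixed_point mu T x.
Proof.
move=> rvx xP; split => //; have -> : [set w | T w (x w) = x w] = setT.
  by apply/seteqP; split => // w _; exact: xP.
by split; [exact: measurableT | exact: probability_setT].
Qed.

End random_fixed_points.

Theorem corollary3p4 (R : realType) (X : completeNormedModType R)
  (d : measure_display) (Omega : measurableType d) (mu : probability Omega R)
  (T : Omega -> X -> X) (alpha2 alpha3 : Omega -> R) :
  separable_space X ->
  measure_is_complete mu ->
  continuous_random_mapping mu T ->
  measurable_fun setT alpha2 -> measurable_fun setT alpha3 ->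
  (forall w, 0 <= alpha2 w) -> (forall w, 0 <= alpha3 w) ->
  (forall w, alpha2 w + alpha3 w < 1) ->
  (forall w (x1 x2 : Omega -> X),
      X_random_variable x1 -> X_random_variable x2 ->
      `|T w (x1 w) - T w (x2 w)| <=
        alpha2 w * `|x1 w - T w (x1 w)| + alpha3 w * `|x2 w - T w (x2 w)|) ->
  (exists x : Omega -> X, random_fixed_point mu T x) /\
  (forall x y : Omega -> X, random_fixed_point mu T x -> random_fixed_point mu T y ->
     {ae mu, forall w, x w = y w}).
Proof.
move=> separable_X _ [rmT _] _ _ a2_ge0 a3_ge0 a23_lt1 HT.
have KT w : kannan_map (alpha2 w) (alpha3 w) (T w).
  by move=> a b; exact: HT (X_random_variable_cst _ a) (X_random_variable_cst _ b).
split.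
  have [x xP] := choice (fun w =>
    kannan_fixed_point (KT w) (a2_ge0 w) (a3_ge0 w) (a23_lt1 w)).
  exists x; apply: (random_fixed_point_everywhere mu _ xP).
  apply: (kannan_fixed_point_random_variable separable_X rmT KT _ _ xP) => w.
    by have := a3_ge0 w; have := a23_lt1 w; lra.
  by have := a2_ge0 w; have := a3_ge0 w; have := a23_lt1 w; lra.
move=> x y /random_fixed_point_ae x_fixed /random_fixed_point_ae y_fixed.
apply: filterS2 x_fixed y_fixed => w Tx Ty.
exact: (kannan_fixed_point_unique (KT w) Tx Ty).
Qed.
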